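(* Let $\Psi\in\Lambda'$ satisfy ${}^{\gamma}\Psi=\Psi$ and $\det\Psi\in\mathbb{C}^*$ (a nonzero complex constant). Then there exists $\alpha\in\mathbb{C}^*$ such that $\Psi=\begin{pmatrix}\alpha&0\\0&\overline{\alpha}\end{pmatrix}$.
   Context: Fix an odd integer $n=2m+1\ge3$, variables $a,b$, and $T=ab$. Let $\Lambda'$ be the group of matrices $M=\begin{pmatrix}P(T)& a^nQ(T)\\ b^nS(T)& R(T)\end{pmatrix}$ with $P,Q,R,S\in\mathbb{C}[T,T^{-1}]$ and $\det M=cT^k$ for some $c\in\mathbb{C}^*$, $k\in\mathbb{Z}$. For such $M$ define ${}^{\gamma}M=\begin{pmatrix}\overline{R}(T)& a^n\overline{S}(T)\\ b^n\overline{Q}(T)& \overline{P}(T)\end{pmatrix}$, where $\overline{P}$ denotes the Laurent polynomial obtained by complex-conjugating the coefficients of $P$. *)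

From HB Require Import structures.
From mathcomp Require Import all_boot all_order all_algebra.
Set Implicit Arguments. Unset Strict Implicit. Unset Printing Implicit Defensive.
Import Order.TTheory GRing.Theory Num.Theory.
Local Open Scope ring_scope.

(* A Laurent polynomial is represented by a pair
   (k, p) with k : nat and p : {poly C}, standing for T^(-k) * p(T).
   Two representations denote the same Laurent polynomial iff [leq_eq] holds. *)
Definition laurent (C : numClosedFieldType) := (nat * {poly C})%type.

Section Laurent.
Variable C : numClosedFieldType.
Implicit Types x y : laurent C.

(* semantic equality: T^(-k1) p1 = T^(-k2) p2  <=>  p1 * T^k2 = p2 * T^k1 *)
Definition lequiv x y : Prop := x.2 * 'X^(y.1) = y.2 * 'X^(x.1).

Definition lconst (c : C) : laurent C := (0%N, c%:P).
Definition lzero : laurent C := lconst 0.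
Definition lmonom (m : int) : laurent C :=
  match m with
  | Posz k => (0%N, 'X^k)
  | Negz k => (k.+1, 1)
  end.
Definition ladd x y : laurent C := ((x.1 + y.1)%N, x.2 * 'X^(y.1) + y.2 * 'X^(x.1)).
Definition lopp x : laurent C := (x.1, - x.2).
Definition lmul x y : laurent C := ((x.1 + y.1)%N, x.2 * y.2).
Definition lconj x : laurent C := (x.1, map_poly (@Num.conj C) x.2).

(* A matrix M = [[P(T), a^n Q(T)], [b^n S(T), R(T)]] (with T = ab) is encoded
   by its four Laurent entries (P, Q, S, R); this encoding is faithful since the
   entries are determined by M. *)
Record mat2 := Mat2 { mP : laurent C; mQ : laurent C; mS : laurent C; mR : laurent C }.

(* det M = P R - a^n b^n Q S = P R - T^n Q S *)
Definition ldet (n : nat) (M : mat2) : laurent C :=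
  ladd (lmul (mP M) (mR M)) (lopp (lmul (lmul (lmonom (Posz n)) (mQ M)) (mS M))).

Definition in_Lambda' (n : nat) (M : mat2) : Prop :=
  exists (c : C) (k : int), c != 0 /\ lequiv (ldet n M) (lmul (lconst c) (lmonom k)).

(* gamma M = [[Rbar, a^n Sbar], [b^n Qbar, Pbar]] *)
Definition gamma (M : mat2) : mat2 :=
  Mat2 (lconj (mR M)) (lconj (mS M)) (lconj (mQ M)) (lconj (mP M)).

Definition mequiv (M N : mat2) : Prop :=
  [/\ lequiv (mP M) (mP N), lequiv (mQ M) (mQ N),
      lequiv (mS M) (mS N) & lequiv (mR M) (mR N)].

End Laurent.

From HB Require Import structures.
From mathcomp Require Import all_boot all_order all_algebra.
From mathcomp Require Import ring zify.
Import Order.TTheory GRing.Theory Num.Theory.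
Local Open Scope ring_scope.

(* Writing R = Pbar and S = Qbar, the determinant is P Pbar - T^n Q Qbar.  The
   norm P Pbar of a nonzero Laurent polynomial has its lowest and highest
   exponents both even, while those of T^n Q Qbar are both odd since n is odd.
   If both terms were nonzero, their difference could only be a single
   monomial if the lowest exponents or the highest exponents coincided, which
   parity forbids; so Q = 0, and then P Pbar = c forces P to be a constant. *)

Section Polynomials.
Context {C : numClosedFieldType}.
Implicit Types (p q f g : {poly C}) (c : C).
Local Notation conjp := (map_poly (@Num.conj C)).

Lemma conjpK : involutive conjp.
Proof. by move=> p; apply/polyP => i; rewrite !coef_map /= conjCK. Qed.

Lemma Xn_neq0 k : ('X^k : {poly C}) != 0.
Proof. exact/monic_neq0/monicXn. Qed.

Lemma coef_neq0_poly_neq0 {p i} : p`_i != 0 -> p != 0.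
Proof. by apply: contraNneq => ->; rewrite coef0. Qed.

Lemma coef_monomial_neq0 c w i : (c%:P * 'X^w)`_i != 0 -> i = w.
Proof. by rewrite coefCM coefXn; case: (i =P w) => // _; rewrite mulr0 eqxx. Qed.

Lemma poly_factor_Xn {p} : p != 0 -> exists a p1, p = p1 * 'X^a /\ p1`_0 != 0.
Proof.
move=> p_neq0; have [a [p1 p1_root Ep]] := multiplicity_XsubC p 0.
exists a, p1; rewrite Ep subr0; split=> //.
by move: p1_root; rewrite p_neq0 /root horner_coef0.
Qed.

Lemma mul_conjp_mulXn p a :
  p * 'X^a * conjp (p * 'X^a) = p * conjp p * 'X^(a.*2).
Proof. by rewrite rmorphM /= map_polyXn -addnn exprD mulrACA. Qed.

Lemma coef0_mul_conjp_neq0 {p} : p`_0 != 0 -> (p * conjp p)`_0 != 0.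
Proof. by rewrite coef0M coef_map /= mul_conjC_eq0. Qed.

Lemma size_mul_conjp {p} : p != 0 -> (size (p * conjp p)).-1 = ((size p).-1).*2.
Proof.
move=> p_neq0; have := size_poly_gt0 p; rewrite p_neq0.
have conjp_neq0 : conjp p != 0 by rewrite -size_poly_eq0 size_map_poly size_poly_eq0.
rewrite size_mul // size_map_poly.
by case: (size p) => // k _; rewrite addSn addnS -addnn.
Qed.

Lemma mulXn_eq_monomial {f u c w} :
  f`_0 != 0 -> f * 'X^u = c%:P * 'X^w -> u = w /\ f = c%:P.
Proof.
move=> f0 E; have uw : u = w.
  by apply: (coef_monomial_neq0 c); rewrite -E coefMXn ltnn subnn.
by split=> //; apply: (mulIf (Xn_neq0 u)); rewrite E uw.
Qed.

Lemma subXn_monomial_low {f g u v c w} :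
  f`_0 != 0 -> (u < v)%N -> f * 'X^u - g * 'X^v = c%:P * 'X^w -> u = w.
Proof.
move=> f0 uv E; apply: (coef_monomial_neq0 c).
by rewrite -E coefB !coefMXn ltnn uv subnn subr0.
Qed.

Lemma subXn_monomial_high {f g u v c w} :
  f != 0 -> (v + (size g).-1 < u + (size f).-1)%N ->
  f * 'X^u - g * 'X^v = c%:P * 'X^w -> (u + (size f).-1)%N = w.
Proof.
move=> f_neq0 lt_vg_uf E; apply: (coef_monomial_neq0 c).
have g_high : (size g <= u + (size f).-1 - v)%N by lia.
rewrite -E coefB !coefMXn ltnNge leq_addr /= addKn (nth_default _ g_high).
by case: ifP => _; rewrite subr0 -lead_coefE lead_coef_eq0.
Qed.

Lemma subXn_eq_monomial {f g u v c w} :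
  f`_0 != 0 -> g`_0 != 0 -> f * 'X^u - g * 'X^v = c%:P * 'X^w ->
  u = v \/ (u + (size f).-1 = v + (size g).-1)%N.
Proof.
move=> f0 g0 E.
have E' : g * 'X^v - f * 'X^u = (- c)%:P * 'X^w by rewrite polyCN mulNr -E opprB.
have f_neq0 := coef_neq0_poly_neq0 f0; have g_neq0 := coef_neq0_poly_neq0 g0.
have low : u != v -> w = minn u v.
  case: ltngtP => // [uv|vu] _.
  - by have := subXn_monomial_low f0 uv E; lia.
  - by have := subXn_monomial_low g0 vu E'; lia.
have high : (u + (size f).-1 != v + (size g).-1)%N ->
    w = maxn (u + (size f).-1) (v + (size g).-1).
  case: ltngtP => // [lt|gt] _.
  - by have := subXn_monomial_high g_neq0 lt E'; lia.
  - by have := subXn_monomial_high f_neq0 gt E; lia.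
have [|/low w_low] := eqVneq u v; first by left.
have [|/high w_high] := eqVneq (u + (size f).-1)%N (v + (size g).-1)%N; first by right.
lia.
Qed.

Lemma sub_mul_conjp_eq0 p q u v c w : ~~ odd u -> odd v -> ~~ odd w ->
  p * conjp p * 'X^u - q * conjp q * 'X^v = c%:P * 'X^w -> q = 0.
Proof.
move=> u_even v_odd w_even E; have [//|q_neq0] := eqVneq q 0; exfalso.
have [b [q1 [Eq q10]]] := poly_factor_Xn q_neq0.
rewrite Eq mul_conjp_mulXn -[_ * 'X^(b.*2) * _]mulrA -exprD in E.
have [p0|p_neq0] := eqVneq p 0.
  move: E; rewrite p0 !mul0r sub0r -mulNr => /mulXn_eq_monomial [].
    by rewrite coefN oppr_eq0 coef0_mul_conjp_neq0.
  by move=> /(congr1 odd); rewrite oddD odd_double v_odd (negbTE w_even).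
have [a [p1 [Ep p10]]] := poly_factor_Xn p_neq0.
rewrite Ep mul_conjp_mulXn -[_ * 'X^(a.*2) * _]mulrA -exprD in E.
have [] := subXn_eq_monomial (coef0_mul_conjp_neq0 p10) (coef0_mul_conjp_neq0 q10) E;
  rewrite ?size_mul_conjp ?(coef_neq0_poly_neq0 p10, coef_neq0_poly_neq0 q10) //
    => /(congr1 odd);
  by rewrite !oddD !odd_double /= ?addbF (negbTE u_even) v_odd.
Qed.

Lemma mul_conjp_eq_monomial {p c k} :
  c != 0 -> p * conjp p = c%:P * 'X^(k.*2) ->
  exists2 alpha, alpha != 0 & p = alpha%:P * 'X^k.
Proof.
move=> c_neq0 E; have p_neq0 : p != 0.
  apply/eqP => p0; move: E; rewrite p0 !mul0r => /esym/eqP.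
  by rewrite mulf_eq0 polyC_eq0 (negbTE c_neq0) (negbTE (Xn_neq0 _)).
have [a [p1 [Ep p10]]] := poly_factor_Xn p_neq0.
move: E; rewrite Ep mul_conjp_mulXn => /mulXn_eq_monomial.
case=> [|/double_inj -> E1]; first exact: coef0_mul_conjp_neq0.
have p1_size : (size p1 <= 1)%N.
  have := size_mul_conjp (coef_neq0_poly_neq0 p10).
  by rewrite E1 size_polyC c_neq0; lia.
by exists p1`_0; rewrite // -(size1_polyC p1_size).
Qed.

End Polynomials.

Section Laurent.
Context {C : numClosedFieldType}.
Local Notation conjp := (map_poly (@Num.conj C)).

Lemma lequiv_lconjE (x y : laurent C) :
  lequiv (lconj x) y -> x.2 * 'X^(y.1) = conjp y.2 * 'X^(x.1).
Proof. by rewrite /lequiv /= => /(congr1 conjp); rewrite !rmorphM /= !map_polyXn conjpK. Qed.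

Lemma det_gamma_fixed {n} {P Q S R : laurent C} {c} :
  lequiv (lconj R) P -> lequiv (lconj S) Q -> lequiv (ldet n (Mat2 P Q S R)) (lconst c) ->
  P.2 * conjp P.2 * 'X^(Q.1.*2) - Q.2 * conjp Q.2 * 'X^(n + P.1.*2)
    = c%:P * 'X^((P.1 + Q.1).*2).
Proof.
case: P Q S R => [kp p] [kq q] [ks s] [kr r] /lequiv_lconjE /= hr /lequiv_lconjE /= hs.
rewrite /lequiv /= add0n expr0 mulr1 mulNr => hdet.
have Ep : p * conjp p * 'X^(kq.*2) * 'X^(kr + ks) = p * (r * 'X^kp) * 'X^kq * 'X^(kq + ks).
  by rewrite hr -addnn !exprD; ring.
have Eq : q * conjp q * 'X^(n + kp.*2) * 'X^(kr + ks)
    = 'X^n * q * (s * 'X^kq) * 'X^kp * 'X^(kp + kr).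
  by rewrite hs -addnn !exprD; ring.
apply: (mulIf (Xn_neq0 (kr + ks))); rewrite mulrBl Ep Eq.
transitivity ('X^kp * 'X^kq * (p * r * 'X^(kq + ks) - 'X^n * q * s * 'X^(kp + kr))).
  by ring.
by rewrite hdet -!addnn !exprD; ring.
Qed.

End Laurent.

Theorem lemma3p4 (C : numClosedFieldType) (m : nat) (Psi : mat2 C) :
  let n := m.*2.+1 in
  (0 < m)%N ->
  in_Lambda' n Psi ->
  mequiv (gamma Psi) Psi ->
  (exists c : C, c != 0 /\ lequiv (ldet n Psi) (lconst c)) ->
  exists alpha : C, alpha != 0 /\
    mequiv Psi (Mat2 (lconst alpha) (lzero C) (lzero C) (lconst (alpha^*))).
Proof.
case: Psi => P Q S R n _ _ [hP hQ _ _] [c [c_neq0 hdet]].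
have N := det_gamma_fixed hP hQ hdet.
case: P Q S R hP hQ {hdet} N => [kp p] [kq q] [ks s] [kr r].
move=> /lequiv_lconjE hr /lequiv_lconjE hs /= N.
have q0 : q = 0.
  by apply: sub_mul_conjp_eq0 N; rewrite ?oddD /n /= !odd_double.
have s0 : s = 0.
  by apply: (mulIf (Xn_neq0 kq)); rewrite hs q0 rmorph0 !mul0r.
have [alpha alpha_neq0 Ep] : exists2 alpha, alpha != 0 & p = alpha%:P * 'X^kp.
  apply: (mul_conjp_eq_monomial c_neq0); apply: (mulIf (Xn_neq0 (kq.*2))).
  by rewrite /= -[RHS]mulrA -exprD -doubleD -N q0 !mul0r subr0.
exists alpha; split=> //; split; rewrite /lequiv /= ?polyC0 ?expr0 ?mulr1 //=.
- by rewrite q0 !mul0r.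
- by rewrite s0 !mul0r.
- apply: (mulIf (Xn_neq0 kp)); rewrite hr Ep rmorphM /= map_polyC map_polyXn /=.
  by rewrite mulrAC.
Qed.
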